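(* Let $k\ge 8$ and $H\in\mathcal{H}(k)$. If $C$ is a cycle in $H$ of odd weight that is not spanning (i.e. $V(C)\ne V(H)$), then $|N^1[C]|\ge\frac{2k+1}{3}$.
   Context: For $k\in\mathbb{N}$, $\mathcal{H}(k)$ is the family of graphs $H$ for which (i) there is a weight function $\omega:E(H)\to\{3,4,5\}$ such that $H$ contains no cycle $C$ whose weight $\omega(C)=\sum_{e\in E(C)}\omega(e)$ is odd and smaller than $2k+1$, and (ii) there is a spanning tree $T$ of $H$ all of whose edges have weight $3$. For a vertex set (or subgraph) $B$, $N^1[B]$ is the closed (unweighted) neighbourhood of $V(B)$: all vertices at graph distance at most $1$ from some vertex of $B$. *)

From mathcomp Require Import all_boot.
Set Implicit Arguments. Unset Strict Implicit. Unset Printing Implicit Defensive.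

Definition simple_graph (T : finType) (e : rel T) : Prop :=
  symmetric e /\ irreflexive e.

Definition is_cycle (T : finType) (e : rel T) (s : seq T) : Prop :=
  [/\ 3 <= size s, uniq s & cycle e s].

Definition cycle_weight (T : finType) (w : T -> T -> nat) (s : seq T) : nat :=
  \sum_(x <- s) w x (next s x).

(* w is a weight function E(H) -> {3,4,5} (represented as a symmetric
   function on vertex pairs; only values on edges matter). *)
Definition weight_fun (T : finType) (e : rel T) (w : T -> T -> nat) : Prop :=
  (forall x y, w x y = w y x) /\
  (forall x y, e x y -> w x y \in [:: 3; 4; 5]).

Definition no_short_odd_cycle (T : finType) (e : rel T) (w : T -> T -> nat)
  (k : nat) : Prop :=
  forall s, is_cycle e s -> odd (cycle_weight w s) -> 2 * k + 1 <= cycle_weight w s.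

Definition spanning_tree (T : finType) (e t : rel T) : Prop :=
  [/\ symmetric t, subrel t e, (forall x y, connect t x y)
    & (forall s, ~ is_cycle t s)].

Definition weight3_spanning_tree (T : finType) (e : rel T) (w : T -> T -> nat)
  : Prop :=
  exists t : rel T, spanning_tree e t /\ (forall x y, t x y -> w x y = 3).

Definition in_Hk_with (k : nat) (T : finType) (e : rel T) (w : T -> T -> nat)
  : Prop :=
  [/\ simple_graph e, weight_fun e w, no_short_odd_cycle e w k
    & weight3_spanning_tree e w].

Definition closed_nbhd (T : finType) (e : rel T) (B : {set T}) : {set T} :=
  [set v | [exists u in B, (u == v) || e u v]].

(* Let S = N^1[C]. By (i) it suffices to find an odd cycle inside S of weight
   at most 3|S|. Say that a weight-3 component of S is trapped by a cycle s if
   it lies inside s. Every odd cycle s in S yields an odd cycle of weight at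
   most 3(|S| + #trapped), by induction on |S| and the length of s:
   - a chord splits s into two shorter cycles, one of them odd;
   - a vertex y of S off s with weight-3 edges to p, q on s closes the odd arc
     from p to q into an odd cycle; removing the other arc from S decreases |S|
     and traps at most one new component, the one of y. That arc is empty only
     if p, q are consecutive on s with an edge of weight 4.
   Otherwise, write the weight of every cycle edge as 3 + c with c <= 2 and
   charge c to the run of weight-3 cycle edges ending where the edge starts.
   Either the run has a weight-3 neighbour y in S off s, and each y is charged
   at most 3 (three runs at y would make s a triangle of weight 12), or the
   weight-3 component of the run is trapped and charged at most 2.
   Initially nothing is trapped: the weight-3 spanning tree leaves C, which is
   not spanning, through a weight-3 edge inside N^1[C]. *)

From mathcomp Require Import all_boot zify.
Set Implicit Arguments. Unset Strict Implicit. Unset Printing Implicit Defensive.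

Lemma connect_ind (T : finType) (r : rel T) (P : T -> Prop) x :
  P x -> (forall u v, P u -> r u v -> P v) -> forall y, connect r x y -> P y.
Proof.
move=> Px step y /connectP[l pth ->]; elim: l x Px pth => //= v l IHl x Px.
by case/andP=> /(step _ _ Px) Pv; apply: IHl.
Qed.

Lemma leq_sum_cover (I J : finType) (P : pred I) (Q : pred J) (R : I -> J -> bool)
    (F : I -> nat) :
  (forall i, P i -> exists2 j, Q j & R i j) ->
  \sum_(i | P i) F i <= \sum_(j | Q j) \sum_(i | P i && R i j) F i.
Proof.
move=> cover.
have -> : \sum_(j | Q j) \sum_(i | P i && R i j) F i
          = \sum_(i | P i) \sum_(j | Q j && R i j) F i.
  rewrite (exchange_big_dep Q) => [|i j _ /andP[] //].
  by apply: eq_bigr => j Qj; apply: eq_bigl => i; rewrite Qj.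
apply: leq_sum => i /cover[j Qj Rij].
by rewrite (bigD1 j) ?Qj ?Rij //= leq_addr.
Qed.

Lemma sum_le3 (T : finType) (A : {set T}) (f : T -> nat) :
  #|A| <= 2 -> {in A, forall a, f a <= 2} ->
  {in A &, forall a b, a != b -> f a + f b <= 3} ->
  \sum_(a in A) f a <= 3.
Proof.
move=> A_le2 f_le2 pair_le3; have [A_le1|A_gt1] := leqP #|A| 1.
  apply: leq_trans (_ : \sum_(a in A) 2 <= 3); first exact: leq_sum.
  by rewrite sum_nat_const; lia.
have /cards2P[a [b [ab EA]]] : #|A| == 2 by rewrite eqn_leq A_le2.
rewrite EA big_setU1 ?big_set1 ?inE //.
by apply: pair_le3; rewrite // EA !inE eqxx ?orbT.
Qed.

Section WeightedCycles.
Variables (T : finType) (w : T -> T -> nat).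
Local Notation W := (cycle_weight w).

Fixpoint path_weight (x : T) (p : seq T) : nat :=
  if p is y :: p' then w x y + path_weight y p' else 0.

Lemma path_weight_cat x p1 p2 :
  path_weight x (p1 ++ p2) = path_weight x p1 + path_weight (last x p1) p2.
Proof. by elim: p1 x => [|y p1 IHp] x //=; rewrite IHp addnA. Qed.

Lemma path_weight_rcons x p y :
  path_weight x (rcons p y) = path_weight x p + w (last x p) y.
Proof. by rewrite -cats1 path_weight_cat /= addn0. Qed.

Lemma sum_next_at x0 x p : uniq (x :: p) ->
  \sum_(z <- x :: p) w z (next_at z x0 x p) = path_weight x (rcons p x0).
Proof.
elim: p x => [|y p IHp] x /=; first by rewrite big_seq1 eqxx addn0.
case/andP=> xNyp uyp; rewrite big_cons eqxx -IHp //; congr (_ + _).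
by apply: eq_big_seq => z zyp; rewrite ifN //; apply: contraNneq xNyp => <-.
Qed.

Lemma cycle_weight_cons x p : uniq (x :: p) -> W (x :: p) = path_weight x (rcons p x).
Proof. exact: sum_next_at. Qed.

Lemma cycle_weight_rcons x p y :
  uniq (x :: rcons p y) -> W (x :: rcons p y) = path_weight x (rcons p y) + w y x.
Proof. by move=> u; rewrite cycle_weight_cons // path_weight_rcons last_rcons. Qed.

Lemma cycle_weight_rot i s : uniq s -> W (rot i s) = W s.
Proof.
move=> us; have rs : perm_eq (rot i s) s by rewrite perm_rot.
rewrite /cycle_weight (perm_big s rs).
by apply: eq_bigr => x _; rewrite next_rot.
Qed.

Lemma cycle_weight_arcs p q p1 p2 : uniq (p :: p1 ++ q :: p2) ->
  W (p :: p1 ++ q :: p2) = path_weight p (rcons p1 q) + path_weight q (rcons p2 p).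
Proof.
move=> u; rewrite cycle_weight_cons // rcons_cat path_weight_cat /=.
by rewrite !path_weight_rcons addnA.
Qed.

Lemma rot_swap_arcs (p q : T) p1 p2 :
  rot (size p1).+1 (p :: p1 ++ q :: p2) = q :: p2 ++ p :: p1.
Proof. by rewrite -[(size p1).+1]/(size (p :: p1)) -cat_cons rot_size_cat. Qed.

(* [P] carries the hypotheses on [u] and [v] through a possible swap. *)
Lemma rot_odd_arc (P : T -> T -> Prop) s u v c :
  (forall a b, P a b -> P b a) -> P u v ->
  uniq s -> u \in s -> v \in s -> u != v -> odd (W s) ->
  exists i p q p1 p2, [/\ rot i s = p :: p1 ++ q :: p2, P p q
                        & odd (path_weight p (rcons p1 q) + c)].
Proof.
move=> Psym Puv us su sv uv oddW.
case: (rot_to_arc us su sv uv) => i p1 p2 _ _ Ei.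
have ur : uniq (u :: p1 ++ v :: p2) by rewrite -Ei rot_uniq.
move: oddW; rewrite -(cycle_weight_rot i us) Ei cycle_weight_arcs //.
have [oddA _|evenA oddAB] := boolP (odd (path_weight u (rcons p1 v) + c)).
  by exists i, u, v, p1, p2.
exists (rot_add s i (size p1).+1), v, u, p2, p1; split; last 2 first.
- exact: Psym.
- by move: evenA oddAB; rewrite !oddD; case: odd; case: odd; case: odd.
by rewrite -rot_rot_add Ei rot_swap_arcs.
Qed.

End WeightedCycles.

Lemma fpath_next_mem (T : eqType) (f : T -> T) x l z :
  fpath f x l -> z \in belast x l -> f z \in l.
Proof.
elim: l x => [|y l IHl] x //= /andP[/eqP fx pl].
rewrite inE => /orP[/eqP->|zl]; first by rewrite fx mem_head.
by rewrite inE (IHl y) ?orbT.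
Qed.

Section CycleArcs.
Variables (T : finType) (e : rel T) (p q : T) (p1 p2 : seq T).
Let r := p :: p1 ++ q :: p2.

Lemma mem_left_arc : {subset p :: rcons p1 q <= r}.
Proof. by move=> x; rewrite !inE mem_rcons inE mem_cat inE => /or3P[]->; rewrite ?orbT. Qed.

Lemma uniq_left_arc : uniq r -> uniq (p :: rcons p1 q).
Proof. by rewrite /r -cat_cons -cat_rcons cat_uniq => /andP[]. Qed.

Lemma left_arc_notin_right x : uniq r -> x \in p :: rcons p1 q -> x \notin p2.
Proof.
rewrite /r -cat_cons -cat_rcons cat_uniq => /and3P[_ /hasPn disj _] xl.
by apply: contraL xl => /disj.
Qed.

Lemma next_left_arc z : uniq r -> z \in p :: p1 -> next r z \in rcons p1 q.
Proof.
move=> ur zl; have := cycle_next ur; rewrite {2}/r /= rcons_cat /= -cat_rcons.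
by rewrite cat_path => /andP[/fpath_next_mem + _]; apply; rewrite belast_rcons.
Qed.

Lemma next_right_arc z : uniq r -> z \in q :: p2 -> next r z \in rcons p2 p.
Proof.
move=> ur zl; have := cycle_next ur; rewrite {2}/r /= rcons_cat /= -cat_rcons.
by rewrite cat_path last_rcons => /andP[_ /fpath_next_mem]; apply; rewrite belast_rcons.
Qed.

Lemma path_left_arc : cycle e r -> path e p (rcons p1 q).
Proof. by rewrite /r /= rcons_cat /= -cat_rcons cat_path => /andP[]. Qed.

Lemma is_cycle_arc_chord : is_cycle e r -> e q p -> p1 != [::] -> is_cycle e (p :: rcons p1 q).
Proof.
case=> _ ur cr eqp p1n; split; last 2 first.
- exact: uniq_left_arc.
- by rewrite /= rcons_path path_left_arc // last_rcons.
by case: p1 p1n => // x l _; rewrite /= size_rcons.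
Qed.

Lemma is_cycle_arc_detour z : is_cycle e r -> z \notin r -> e q z -> e z p ->
  is_cycle e (p :: rcons (rcons p1 q) z).
Proof.
case=> _ ur cr zr eqz ezp; split.
- by rewrite /= !size_rcons.
- rewrite -cats1 -cat_cons cat_uniq uniq_left_arc //= andbT orbF.
  by apply: contra zr => /mem_left_arc.
- rewrite /= rcons_path [path _ _ (rcons _ z)]rcons_path path_left_arc //.
  by rewrite !last_rcons eqz ezp.
Qed.

End CycleArcs.

Lemma is_cycle_rot (T : finType) (e : rel T) i s : is_cycle e s -> is_cycle e (rot i s).
Proof. by case=> ? ? ?; split; rewrite ?size_rot ?rot_uniq ?rot_cycle. Qed.

Section OddCycles.
Variables (T : finType) (e : rel T) (w : T -> T -> nat).
Hypotheses (e_sym : symmetric e) (e_irr : irreflexive e).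
Hypothesis w_sym : forall x y, w x y = w y x.
Hypothesis w_edge : forall x y, e x y -> w x y \in [:: 3; 4; 5].
Local Notation W := (cycle_weight w).

Lemma w_edge_ge3 x y : e x y -> 3 <= w x y.
Proof. by move/w_edge; rewrite !inE => /or3P[] /eqP->. Qed.

Lemma w_edge_le5 x y : e x y -> w x y <= 5.
Proof. by move/w_edge; rewrite !inE => /or3P[] /eqP->. Qed.

Lemma w_edge_even x y : e x y -> ~~ odd (w x y) -> w x y = 4.
Proof. by move/w_edge; rewrite !inE => /or3P[] /eqP->. Qed.

Definition chordless (s : seq T) : Prop :=
  forall u v, u \in s -> v \in s -> e u v -> next s u = v \/ next s v = u.

Lemma chordless_rot i s : uniq s -> chordless s -> chordless (rot i s).
Proof. by move=> us chl u v; rewrite !mem_rot !(next_rot i us); apply: chl. Qed.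

Lemma chord_reduction s : is_cycle e s -> odd (W s) ->
  chordless s \/
  exists s1, [/\ is_cycle e s1, {subset s1 <= s}, size s1 < size s & odd (W s1)].
Proof.
move=> cys oddW; have [_ us _] := cys.
have [/existsP[u /existsP[v /and5P[su sv euv nuv nvu]]]|no_chord] :=
  boolP [exists u, exists v, [&& u \in s, v \in s, e u v, next s u != v & next s v != u]];
  last first.
  left=> u v su sv euv; case: (eqVneq (next s u) v) => [|nuv]; [by left | right].
  apply/eqP; apply: contraNT no_chord => nvu.
  by apply/existsP; exists u; apply/existsP; exists v; rewrite su sv euv nuv nvu.
right; have uv : u != v by apply: contraTneq euv => ->; rewrite e_irr.
pose P a b := [/\ e a b, w a b = w u v, next s a != b & next s b != a].
have Psym a b : P a b -> P b a by case=> *; split; rewrite 1?e_sym 1?w_sym.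
have [i [p [q [p1 [p2 [Er [epq wpq npq nqp] oddA]]]]]] :=
  rot_odd_arc (w u v) Psym (And4 euv erefl nuv nvu) us su sv uv oddW.
have cyr : is_cycle e (p :: p1 ++ q :: p2) by rewrite -Er; apply: is_cycle_rot.
have [_ ur _] := cyr.
have p1n : p1 != [::].
  apply: contra npq => /eqP p10; rewrite -(next_rot i us) Er.
  by have := next_left_arc ur (mem_head p p1); rewrite p10 inE.
have p2n : p2 != [::].
  apply: contra nqp => /eqP p20; rewrite -(next_rot i us) Er.
  by have := next_right_arc ur (mem_head q p2); rewrite p20 inE.
exists (p :: rcons p1 q); split.
- by apply: (is_cycle_arc_chord cyr); rewrite // e_sym.
- by move=> x /(mem_left_arc p2); rewrite -Er mem_rot.
- rewrite -(size_rot i s) Er /= size_rcons size_cat /= addnS !ltnS.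
  by rewrite -[X in X < _]addn0 ltn_add2l lt0n size_eq0.
- by rewrite cycle_weight_rcons ?(uniq_left_arc ur) // w_sym wpq.
Qed.

Definition edge3 (S : {set T}) : rel T :=
  fun x y => [&& x \in S, y \in S, e x y & w x y == 3].

Definition comp3 (S : {set T}) x : {set T} := [set z | connect (edge3 S) x z].

Definition trapped (S A : {set T}) : {set {set T}} :=
  [set comp3 S x | x in S & comp3 S x \subset A].

Lemma edge3_sym S : symmetric (edge3 S).
Proof. by move=> x y; rewrite /edge3 e_sym w_sym andbCA [(y \in S) && _]andbC. Qed.

Lemma edge3_subset (S S' : {set T}) : S' \subset S -> subrel (edge3 S') (edge3 S).
Proof.
by move=> /subsetP sub x y /and4P[/sub xS /sub yS exy wxy]; rewrite /edge3 xS yS exy wxy.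
Qed.

Lemma comp3_eq S x y : connect (edge3 S) x y -> comp3 S x = comp3 S y.
Proof.
move=> cxy; apply/setP => z; rewrite !inE.
by apply/idP/idP; apply: connect_trans; rewrite // (sym_connect_sym (@edge3_sym S)).
Qed.

Lemma trapped_subset (S A B : {set T}) : A \subset B -> trapped S A \subset trapped S B.
Proof.
move=> AB; apply/imsetS/subsetP => x; rewrite !inE => /andP[-> /subset_trans]; exact.
Qed.

Definition adjacent4 (s : seq T) p q :=
  (next s p == q) && (w p q == 4) || (next s q == p) && (w q p == 4).

Lemma adjacent4C s p q : adjacent4 s p q = adjacent4 s q p.
Proof. exact: orbC. Qed.

Lemma cycle_weight_triangle s x y z : uniq s -> x \in s -> uniq [:: x; y; z] ->
  next s x = y -> next s y = z -> next s z = x -> W s = w x y + w y z + w z x.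
Proof.
move=> us sx uxyz nxy nyz nzx.
have sy : y \in s by rewrite -nxy mem_next.
have sz : z \in s by rewrite -nyz mem_next.
have s_sub a : a \in s -> a \in [:: x; y; z].
  rewrite -(fconnect_cycle (cycle_next us) sx).
  apply: (connect_ind (P := fun a => a \in [:: x; y; z])) => [|u v]; first exact: mem_head.
  by rewrite !inE => /or3P[]/eqP-> /eqP<-; rewrite ?nxy ?nyz ?nzx eqxx ?orbT.
have perm_s : perm_eq s [:: x; y; z].
  apply: uniq_perm => // a; apply/idP/idP => [/s_sub //|].
  by rewrite !inE => /or3P[]/eqP->.
by rewrite /cycle_weight (perm_big _ perm_s) !big_cons big_nil nxy nyz nzx /= addn0 addnA.
Qed.

Lemma adjacent4P s a b :
  adjacent4 s a b -> next s a = b /\ w a b = 4 \/ next s b = a /\ w b a = 4.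
Proof. by case/orP=> /andP[/eqP-> /eqP->]; [left | right]. Qed.

Lemma adjacent4_triangle s x y z : uniq s -> odd (W s) -> x \in s -> uniq [:: x; y; z] ->
  adjacent4 s x y -> adjacent4 s y z -> adjacent4 s z x -> False.
Proof.
move=> us oddW sx uxyz.
move: (uxyz); rewrite /= !inE !negb_or andbT => /andP[/andP[xy xz] yz].
have uxzy : uniq [:: x; z; y] by rewrite /= !inE !negb_or xz xy eq_sym yz.
have triangle a b c : uniq [:: a; b; c] -> a \in s -> next s a = b -> next s b = c ->
    next s c = a -> w a b = 4 -> w b c = 4 -> w c a = 4 -> False.
  move=> uabc sa nab nbc nca wab wbc wca.
  by move: oddW; rewrite (cycle_weight_triangle us sa uabc nab nbc nca) wab wbc wca.
move/eqP in xy; move/eqP in xz; move/eqP in yz.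
case/adjacent4P=> [[nxy wxy]|[nyx wyx]] /adjacent4P[[nyz wyz]|[nzy wzy]]
  /adjacent4P[[nzx wzx]|[nxz wxz]]; try congruence.
- exact: triangle uxyz sx nxy nyz nzx wxy wyz wzx.
- exact: triangle uxzy sx nxz nzy nyx wxz wzy wyx.
Qed.

Definition bridgeless (S : {set T}) (s : seq T) : Prop :=
  forall y p q, y \in S -> y \notin s -> p \in s -> q \in s -> p != q ->
    edge3 S y p -> edge3 S y q -> adjacent4 s p q.

Section Detour.
Variables (S : {set T}) (p q y : T) (p1 p2 : seq T).
Let r := p :: p1 ++ q :: p2.
Let S' := S :\: [set x in p2].
Let s' := p :: rcons (rcons p1 q) y.
Hypotheses (cyr : is_cycle e r) (rS : {subset r <= S}) (chl : chordless r).
Hypotheses (yS : y \in S) (yr : y \notin r) (yp : edge3 S y p) (yq : edge3 S y q).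

Lemma chordless_arc_exit u v : u \in p :: rcons p1 q -> v \in p2 -> e u v ->
  (u == p) || (u == q).
Proof.
have [_ ur _] := cyr; move=> ul vp2 euv.
have vr : v \in r by rewrite !inE mem_cat inE vp2 !orbT.
case: (chl (mem_left_arc p2 ul) vr euv) => [nuv|nvu].
  move: ul; rewrite -cats1 -cat_cons mem_cat => /orP[/(next_left_arc ur)|];
    last by rewrite inE => ->; rewrite orbT.
  rewrite nuv => vl; have /(left_arc_notin_right ur) : v \in p :: rcons p1 q.
    by rewrite inE vl orbT.
  by rewrite vp2.
have vq : v \in q :: p2 by rewrite inE vp2 orbT.
have := next_right_arc ur vq; rewrite nvu mem_rcons inE => /orP[->//|up2].
by have := left_arc_notin_right ur ul; rewrite up2.
Qed.

Let mem_detour x : (x \in s') = (x == y) || (x \in p :: rcons p1 q).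
Proof. by rewrite !inE mem_rcons inE orbCA. Qed.

Let edge3_detour : [/\ e q y, e y p, w q y = 3 & w y p = 3].
Proof.
move: yp yq => /and4P[_ _ eyp /eqP wyp] /and4P[_ _ eyq /eqP wyq].
by split=> //; rewrite 1?e_sym 1?w_sym.
Qed.

Lemma is_cycle_detour : is_cycle e s'.
Proof. by have [eqy eyp _ _] := edge3_detour; apply: is_cycle_arc_detour cyr yr eqy eyp. Qed.

Lemma odd_detour : odd (path_weight w p (rcons p1 q)) -> odd (W s').
Proof.
have [_ us' _] := is_cycle_detour; have [_ _ wqy wyp] := edge3_detour.
rewrite (cycle_weight_rcons w us') [in X in _ -> X]path_weight_rcons last_rcons.
by rewrite wqy wyp -addnA oddD => ->.
Qed.

Lemma detour_subset : {subset s' <= S'}.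
Proof.
have [_ ur _] := cyr; move=> x; rewrite mem_detour => /orP[/eqP->|xl].
  rewrite !inE yS andbT; apply: contra yr => yp2.
  by rewrite !inE mem_cat inE yp2 !orbT.
by rewrite !inE (left_arc_notin_right ur xl) rS // mem_left_arc.
Qed.

Lemma card_detour : p2 != [::] -> #|S'| < #|S|.
Proof.
move=> p2n; have [x xp2] : exists x, x \in p2.
  by case: (p2) p2n => // x l _; exists x; rewrite mem_head.
apply: proper_card; apply/properP; split; first exact: subsetDl.
exists x; last by rewrite !inE xp2.
by apply: rS; rewrite !inE mem_cat inE xp2 !orbT.
Qed.

Lemma comp3_detour_arc x : comp3 S' x \subset [set z in s'] -> y \notin comp3 S' x ->
  {subset comp3 S' x <= p :: rcons p1 q}.
Proof.
move=> /subsetP sub yNc z zc; have := sub z zc; rewrite in_set mem_detour.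
by case/orP=> [/eqP zy|//]; move: yNc; rewrite -zy zc.
Qed.

Lemma comp3_detour x : comp3 S' x \subset [set z in s'] -> y \notin comp3 S' x ->
  comp3 S' x = comp3 S x.
Proof.
move=> sub yNc; have in_arc z : connect (edge3 S') x z -> z \in p :: rcons p1 q.
  by move=> cz; apply: (comp3_detour_arc sub yNc); rewrite inE.
have S'S : S' \subset S by apply: subsetDl.
apply/eqP; rewrite eqEsubset; apply/andP; split; apply/subsetP => z; rewrite !inE.
  by apply: connect_sub => a b /(edge3_subset S'S)/connect1.
apply: (connect_ind (P := connect (edge3 S') x)) => [|u v cu /and4P[_ vS euv wuv]].
  exact: connect0.
have uS' : u \in S' by apply: detour_subset; rewrite mem_detour in_arc ?orbT.
have [vS'|vNS'] := boolP (v \in S').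
  by apply: connect_trans cu (connect1 _); rewrite /edge3 uS' vS' euv.
have vp2 : v \in p2 by move: vNS'; rewrite !inE vS andbT negbK.
have yS' : y \in S' by apply: detour_subset; rewrite mem_detour eqxx.
have [eqy eyp wqy wyp] := edge3_detour.
have uy : edge3 S' u y.
  rewrite /edge3 uS' yS' /=.
  case/orP: (chordless_arc_exit (in_arc u cu) vp2 euv) => /eqP->;
    by rewrite ?eqy ?wqy // e_sym eyp w_sym wyp.
by move: yNc; rewrite inE (connect_trans cu (connect1 uy)).
Qed.

Lemma trapped_detour :
  trapped S' [set z in s'] \subset comp3 S' y |: trapped S [set z in r].
Proof.
apply/subsetP => K /imsetP[x]; rewrite inE => /andP[xS' sub] ->.
have [yc|yNc] := boolP (y \in comp3 S' x).
  by rewrite in_setU1 (comp3_eq (_ : connect _ x y)) ?eqxx //; rewrite inE in yc.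
rewrite in_setU1 (comp3_detour sub yNc); apply/orP; right; apply: imset_f.
rewrite inE (subsetP (subsetDl _ _) _ xS') -(comp3_detour sub yNc) /=.
apply/subsetP => z /(comp3_detour_arc sub yNc) zl; rewrite inE.
exact: mem_left_arc.
Qed.

Lemma detour_reduction : p2 != [::] -> odd (path_weight w p (rcons p1 q)) ->
  exists (S1 : {set T}) s1,
    [/\ #|S1| < #|S|, is_cycle e s1, {subset s1 <= S1}, odd (W s1)
       & #|trapped S1 [set z in s1]| <= #|trapped S [set z in r]|.+1].
Proof.
move=> p2n oddA; exists S', s'; split; last 1 first.
- apply: leq_trans (subset_leq_card trapped_detour) _.
  by rewrite cardsU1; case: (_ \notin _).
- exact: card_detour.
- exact: is_cycle_detour.
- exact: detour_subset.
- exact: odd_detour.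
Qed.

End Detour.

Lemma bridge_reduction (S : {set T}) s :
  is_cycle e s -> {subset s <= S} -> odd (W s) -> chordless s ->
  bridgeless S s \/
  exists (S1 : {set T}) s1,
    [/\ #|S1| < #|S|, is_cycle e s1, {subset s1 <= S1}, odd (W s1)
       & #|trapped S1 [set z in s1]| <= #|trapped S [set z in s]|.+1].
Proof.
move=> cys sS oddW chl; have [_ us cs] := cys.
have [/existsP[y /existsP[u /existsP[v]]]|no_bridge] := boolP [exists y, exists u, exists v,
    [&& y \in S, y \notin s, u \in s, v \in s, u != v &
        [&& edge3 S y u, edge3 S y v & ~~ adjacent4 s u v]]]; last first.
  left=> y u v yS yNs su sv uv yu yv; apply: contraNT no_bridge => nadj.
  apply/existsP; exists y; apply/existsP; exists u; apply/existsP; exists v.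
  by rewrite yS yNs su sv uv yu yv nadj.
case/and5P=> yS yNs su sv /andP[uv /and3P[yu yv nadj]]; right.
pose P a b := [/\ edge3 S y a, edge3 S y b & ~~ adjacent4 s a b].
have Psym a b : P a b -> P b a by case=> *; split; rewrite // adjacent4C.
have [i [p [q [p1 [p2 [Er [yp yq npq]]]]]]] :=
  rot_odd_arc 0 Psym (And3 yu yv nadj) us su sv uv oddW.
rewrite addn0 => oddA.
have cyr : is_cycle e (p :: p1 ++ q :: p2) by rewrite -Er; apply: is_cycle_rot.
have [_ ur _] := cyr; have mem_r x : (x \in p :: p1 ++ q :: p2) = (x \in s).
  by rewrite -Er mem_rot.
have p2n : p2 != [::].
  apply: contra npq => /eqP p20; apply/orP; right.
  have nqp : next s q = p.
    rewrite -(next_rot i us) Er; apply/eqP.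
    by have := next_right_arc ur (mem_head q p2); rewrite p20 inE.
  have sq : q \in s by rewrite -mem_r !inE mem_cat inE eqxx !orbT.
  rewrite nqp eqxx /=; apply/eqP/w_edge_even; first by rewrite -nqp next_cycle.
  move: oddW; rewrite -(cycle_weight_rot w i us) Er cycle_weight_arcs // p20 /=.
  by rewrite addn0 oddD oddA.
have rS : {subset p :: p1 ++ q :: p2 <= S} by move=> x; rewrite mem_r; apply: sS.
have chlr : chordless (p :: p1 ++ q :: p2) by rewrite -Er; apply: chordless_rot.
have yNr : y \notin p :: p1 ++ q :: p2 by rewrite mem_r.
have [S1 [s1 [ltS1 cys1 s1S1 odd1 trap1]]] :=
  detour_reduction cyr rS chlr yS yNr yp yq p2n oddA.
exists S1, s1; split=> //; move: trap1.
by congr (_ <= #|trapped S _|.+1); apply/setP => x; rewrite !in_set mem_r.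
Qed.

Section Accounting.
Variables (S : {set T}) (s : seq T).
Hypotheses (cys : is_cycle e s) (sS : {subset s <= S}) (oddW : odd (W s)).
Hypotheses (chl : chordless s) (brl : bridgeless S s).

Definition cost a := w a (next s a) - 3.

Definition costly a := (a \in s) && (cost a != 0).

Definition step3 : rel T := fun b c => [&& b \in s, c \in s &
  (next s b == c) && (w b c == 3) || (next s c == b) && (w c b == 3)].

Definition attached_to a y :=
  [&& y \in S, y \notin s & [exists b, connect step3 a b && edge3 S b y]].

Definition attached a := [exists y, attached_to a y].

Let us : uniq s. Proof. by case: cys. Qed.
Let e_next a : a \in s -> e a (next s a).
Proof. by case: cys => _ _ cs; apply: next_cycle. Qed.

Lemma cost_le2 a : a \in s -> cost a <= 2.
Proof. by move=> sa; rewrite /cost leq_subLR w_edge_le5 ?e_next. Qed.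

Lemma cycle_weight_cost : W s = 3 * size s + \sum_(a | costly a) cost a.
Proof.
rewrite /cycle_weight (eq_big_seq (fun a => 3 + cost a)) => [|a sa]; last first.
  by rewrite /cost subnKC // w_edge_ge3 ?e_next.
rewrite big_split /= big_const_seq count_predT iter_addn_0 mulnC; congr (_ + _).
rewrite big_uniq // (bigID (fun a => cost a != 0)) /= addnC big1 => [|a /andP[_]];
  last by move/negPn/eqP.
by rewrite add0n.
Qed.

Lemma step3_sym : symmetric step3.
Proof. by move=> b c; rewrite /step3 andbCA orbC. Qed.

Lemma connect_step3_mem a b : a \in s -> connect step3 a b -> b \in s.
Proof.
by move=> sa; apply: (connect_ind (P := fun b => b \in s)) => // u v _ /and3P[].
Qed.

Lemma edge3_step3 u v : u \in s -> v \in s -> edge3 S u v -> step3 u v.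
Proof.
move=> su sv /and4P[_ _ euv wuv]; rewrite /step3 su sv (w_sym v u) wuv !andbT.
by case: (chl su sv euv) => ->; rewrite eqxx ?orbT.
Qed.

Lemma costly_connect_eq a b : costly a -> costly b -> connect step3 a b -> a = b.
Proof.
move=> /andP[_ ca] /andP[_ cb] cab.
(* Following [next] from [b] reaches [a] along weight-3 edges only. *)
pose light c j := forall i, i < j -> cost (iter i (next s) c) = 0.
have [j ija hj] : exists2 j, iter j (next s) b = a & light b j.
  apply: (connect_ind (P := fun c => exists2 j, iter j (next s) c = a & light c j)) cab.
    by exists 0.
  move=> u v [j ija hj].
  case/and3P=> _ _ /orP[/andP[/eqP nuv /eqP wuv]|/andP[/eqP nvu /eqP wvu]].
    case: j ija hj => [|j] ija hj; first by move: ca; rewrite -ija /cost /= nuv wuv.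
    by exists j => [|i ltij]; rewrite -nuv -iterSr ?hj.
  exists j.+1 => [|[|i] lti]; rewrite ?iterSr ?nvu //; first by rewrite /cost /= nvu wvu.
  exact: hj.
case: j ija hj => [|j] <- // hj.
by move: cb; rewrite (hj 0).
Qed.

Lemma comp3_unattached a z : a \in s -> ~~ attached a -> connect (edge3 S) a z ->
  (z \in s) && connect step3 a z.
Proof.
move=> sa na; apply: (connect_ind (P := fun z => (z \in s) && connect step3 a z)).
  by rewrite sa connect0.
move=> u v /andP[su cau] uv; have [sv|svN] := boolP (v \in s).
  by rewrite (connect_trans cau) // connect1 // edge3_step3.
have /and4P[_ vS _ _] := uv.
case/negP: na; apply/existsP; exists v.
by rewrite /attached_to vS svN; apply/existsP; exists u; rewrite cau uv.
Qed.

Lemma card_costly_unattached :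
  #|[set a | costly a && ~~ attached a]| <= #|trapped S [set z in s]|.
Proof.
set U := [set a | _].
have sU a : a \in U -> a \in s by rewrite inE => /andP[/andP[-> _] _].
have comp3U a z : a \in U -> z \in comp3 S a -> (z \in s) && connect step3 a z.
  move=> aU; rewrite inE; apply: comp3_unattached (sU a aU) _.
  by move: aU; rewrite inE => /andP[].
have inj : {in U &, injective (comp3 S)}.
  move=> a b aU bU eqab.
  have /(comp3U a b aU)/andP[_ cab] : b \in comp3 S a by rewrite eqab inE connect0.
  by apply: costly_connect_eq cab; [move: aU | move: bU]; rewrite inE => /andP[].
rewrite -(card_in_imset inj); apply/subset_leq_card/subsetP => _ /imsetP[a aU ->].
apply: imset_f; rewrite inE sS ?sU //=; apply/subsetP => z /(comp3U a z aU).
by rewrite inE => /andP[].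
Qed.

Lemma cost_adjacent4_eq1 a b : costly a -> connect step3 a b ->
  w b (next s b) = 4 -> cost a = 1.
Proof.
move=> ca cab wb; have sb : b \in s by apply: connect_step3_mem cab; case/andP: ca.
have cb : costly b by rewrite /costly sb /cost wb.
by rewrite (costly_connect_eq ca cb cab) /cost wb.
Qed.

Section Bucket.
Variable y : T.
Let B := [set a | costly a && attached_to a y].

Let bucketP a : a \in B ->
  [/\ costly a, y \in S, y \notin s & exists2 b, connect step3 a b & edge3 S b y].
Proof.
rewrite inE => /and4P[ca yS yNs /existsP[b /andP[cab by_]]].
by split=> //; exists b.
Qed.

Let bucket_adjacent4 a1 a2 b1 b2 : a1 \in B -> a2 \in B -> a1 != a2 ->
  connect step3 a1 b1 -> edge3 S b1 y -> connect step3 a2 b2 -> edge3 S b2 y ->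
  b1 != b2 /\ adjacent4 s b1 b2.
Proof.
move=> /bucketP[ca1 yS yNs _] /bucketP[ca2 _ _ _] a12 c1 y1 c2 y2.
have sa1 : a1 \in s by case/andP: ca1.
have sa2 : a2 \in s by case/andP: ca2.
have b12 : b1 != b2.
  apply: contra a12 => /eqP b12; apply/eqP/costly_connect_eq => //.
  by rewrite (connect_trans c1) // b12 (sym_connect_sym step3_sym).
split=> //; apply: brl yS yNs _ _ b12 _ _; rewrite 1?edge3_sym //.
- exact: connect_step3_mem c1.
- exact: connect_step3_mem c2.
Qed.

Lemma bucket_pair a1 a2 : a1 \in B -> a2 \in B -> a1 != a2 -> cost a1 + cost a2 <= 3.
Proof.
move=> a1B a2B a12.
have [ca1 _ _ [b1 c1 y1]] := bucketP a1B; have [ca2 _ _ [b2 c2 y2]] := bucketP a2B.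
have [_ /adjacent4P[[n12 w12]|[n21 w21]]] := bucket_adjacent4 a1B a2B a12 c1 y1 c2 y2.
  rewrite (cost_adjacent4_eq1 ca1 c1) ?n12 // add1n ltnS cost_le2 //.
  by case/andP: ca2.
rewrite (cost_adjacent4_eq1 ca2 c2) ?n21 // addn1 ltnS cost_le2 //.
by case/andP: ca1.
Qed.

Lemma card_bucket : #|B| <= 2.
Proof.
rewrite leqNgt; apply/card_gt2P => -[a1 [a2 [a3 [[a1B a2B a3B] [a12 a23 a31]]]]].
have [ca1 _ _ [b1 c1 y1]] := bucketP a1B; have [_ _ _ [b2 c2 y2]] := bucketP a2B.
have [_ _ _ [b3 c3 y3]] := bucketP a3B.
have [b12 adj12] := bucket_adjacent4 a1B a2B a12 c1 y1 c2 y2.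
have [b23 adj23] := bucket_adjacent4 a2B a3B a23 c2 y2 c3 y3.
have [b31 adj31] := bucket_adjacent4 a3B a1B a31 c3 y3 c1 y1.
apply: (adjacent4_triangle us oddW _ _ adj12 adj23 adj31).
  by apply: connect_step3_mem c1; case/andP: ca1.
by rewrite /= !inE !negb_or b12 b23 eq_sym b31.
Qed.

Lemma cost_bucket : \sum_(a in B) cost a <= 3.
Proof.
apply: sum_le3 card_bucket _ bucket_pair => a /bucketP[/andP[sa _] _ _ _].
exact: cost_le2.
Qed.

End Bucket.

Lemma weight_le_trapped : W s <= 3 * (#|S| + #|trapped S [set z in s]|).
Proof.
have cover a : costly a && attached a ->
    exists2 y, y \in S :\: [set z in s] & attached_to a y.
  case/andP=> _ /existsP[y ay]; exists y => //.
  by case/and3P: ay => yS yNs _; rewrite !inE yS yNs.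
have paid : \sum_(a | costly a && attached a) cost a <= 3 * #|S :\: [set z in s]|.
  apply: leq_trans (leq_sum_cover _ cover) _.
  rewrite mulnC -sum_nat_const; apply: leq_sum => y _.
  rewrite (eq_bigl (fun a => a \in [set a | costly a && attached_to a y])) ?cost_bucket //.
  move=> a; rewrite inE -andbA; case ay: (attached_to a y); rewrite ?andbF //.
  by have -> : attached a by apply/existsP; exists y.
have unpaid : \sum_(a | costly a && ~~ attached a) cost a
              <= 2 * #|trapped S [set z in s]|.
  apply: leq_trans (_ : \sum_(a | costly a && ~~ attached a) 2 <= _).
    by apply: leq_sum => a /andP[/andP[sa _] _]; apply: cost_le2.
  have -> : \sum_(a | costly a && ~~ attached a) 2
            = #|[set a | costly a && ~~ attached a]| * 2.
    by rewrite -sum_nat_const; apply: eq_bigl => a; rewrite inE.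
  by rewrite mulnC leq_mul2l card_costly_unattached.
have card_S : #|S| = size s + #|S :\: [set z in s]|.
  have sub : [set z in s] \subset S by apply/subsetP => z; rewrite inE; apply: sS.
  by rewrite -(cardsID [set z in s] S) (setIidPr sub) cardsE (card_uniqP us).
rewrite cycle_weight_cost (bigID attached) /= card_S.
apply: leq_trans (leq_add (leqnn _) (leq_add paid unpaid)) _.
by rewrite !mulnDr addnA leq_add2l leq_mul2r orbT.
Qed.

End Accounting.

Lemma odd_cycle_weight_le (S : {set T}) s :
  is_cycle e s -> {subset s <= S} -> odd (W s) ->
  exists2 s', is_cycle e s' /\ odd (W s')
            & W s' <= 3 * (#|S| + #|trapped S [set z in s]|).
Proof.
have [n ltSn] := ubnP #|S|; elim: n => [//|n IHn] in S s ltSn *.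
have [m ltsm] := ubnP (size s); elim: m => [//|m IHm] in s ltsm *.
move=> cys sS oddW.
have [chl|[s1 [cys1 s1s lts1 odd1]]] := chord_reduction cys oddW; last first.
  have s1S : {subset s1 <= S} by move=> x /s1s; apply: sS.
  have [s' cyc' le'] := IHm s1 (leq_trans lts1 ltsm) cys1 s1S odd1.
  exists s' => //; apply: leq_trans le' _; rewrite leq_mul2l leq_add2l orbC.
  rewrite subset_leq_card // trapped_subset //.
  by apply/subsetP => x; rewrite !inE => /s1s.
have [brl|[S1 [s1 [ltS1 cys1 s1S1 odd1 trap1]]]] := bridge_reduction cys sS oddW chl.
  by exists s => //; apply: weight_le_trapped.
have [|s' cyc' le'] := IHn S1 s1 _ cys1 s1S1 odd1; first by apply: leq_trans ltS1 _.
by exists s' => //; apply: leq_trans le' _; lia.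
Qed.

End OddCycles.

Lemma trapped_closed_nbhd (T : finType) (e : rel T) (w : T -> T -> nat) (A : {set T}) :
  weight3_spanning_tree e w -> A != [set: T] -> trapped e w (closed_nbhd e A) A = set0.
Proof.
case=> t [[_ te tconn _] tw3] nspan; apply/eqP; rewrite -subset0.
apply/subsetP => K /imsetP[x]; rewrite inE => /andP[_ sub] _.
case/eqP: nspan; apply/setP => v; rewrite inE; apply: (subsetP sub); rewrite inE.
apply: (connect_ind (P := connect (edge3 e w (closed_nbhd e A)) x)) (tconn x v).
  exact: connect0.
move=> u v' cu tuv; have uA : u \in A by apply: (subsetP sub); rewrite inE.
apply: connect_trans cu (connect1 _).
rewrite /edge3 te // tw3 // eqxx !andbT !inE.
by apply/andP; split; apply/existsP; exists u; rewrite uA ?eqxx // (te _ _ tuv) orbT.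
Qed.

Theorem lemma2p5 (k : nat) (T : finType) (e : rel T) (w : T -> T -> nat)
  (C : seq T) :
  8 <= k -> in_Hk_with k e w ->
  is_cycle e C -> odd (cycle_weight w C) ->
  [set x in C] != [set: T] ->
  2 * k + 1 <= 3 * #|closed_nbhd e [set x in C]|.
Proof.
move=> _ [[e_sym e_irr] [w_sym w_edge] no_short tree3] cycC oddC nspan.
have CN : {subset C <= closed_nbhd e [set x in C]}.
  by move=> x xC; rewrite inE; apply/existsP; exists x; rewrite inE xC eqxx.
have [C' [cycC' oddC'] le] := odd_cycle_weight_le e_sym e_irr w_sym w_edge cycC CN oddC.
rewrite (trapped_closed_nbhd tree3 nspan) cards0 addn0 in le.
exact: leq_trans (no_short C' cycC' oddC') le.
Qed.
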